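(* Let $n\ge2$ and let $r_1,\dots,r_N$, $N=3\cdot4^{n-1}$, be the vertices of the Koch snowflake $S_n$ (indices modulo $N$). Then: (i) the sharp points of $S_n$ are exactly the vertices $r_m$ with $m=4^{l}(4k-2)+1$ for $l\in\{0,1,\dots,n-2\}$, $k\in\{1,2,\dots,3\cdot4^{\,n-2-l}\}$, or $m=4^{n-1}(k-1)+1$ for $k\in\{1,2,3\}$; (ii) for the snowflake code $u_n=c_1\cdots c_{6\cdot4^{n-2}}$ and for $S_n$ or any image of $S_n$ under an invertible affine map: if $c_j=1$ then $\kappa_{2j-2}=\kappa_{2j-1}=-1$, $\bar\kappa_{2j-2}=-1$, $\bar\kappa_{2j-1}=1$; if $c_j=0$ then $\kappa_{2j-2}=\kappa_{2j-1}=\bar\kappa_{2j-2}=\bar\kappa_{2j-1}=1$; (iii) $u_2=111111$, and if $u_n=c_1c_2\cdots c_m$ then $u_{n+1}=c_1\,101\,c_2\,101\cdots c_m\,101$ (each letter of $u_n$ followed by the word $101$); in particular $u_3=(1101)^6$ and $u_n$ has $6\cdot4^{n-2}$ letters.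
   Context: Let $R_\theta$ denote counterclockwise rotation of $\mathbb R^2$ by the angle $\theta$. Let $v_1,v_2,v_3$ be the vertices of an equilateral triangle in counterclockwise order. The Koch snowflake at step $n$ is the closed polygon $S_n$ with vertices $r_1,\dots,r_{3\cdot4^{n-1}}$ (indices taken modulo $3\cdot4^{n-1}$, so $r_0$ is the last vertex), defined recursively: $S_1$ has vertices $v_1,v_2,v_3$; $S_{n+1}$ is obtained from $S_n$ by replacing each edge from $p$ to $q$ (including the closing edge from the last vertex to $r_1$), in cyclic order, by the four edges through $p,\ p+\tfrac13(q-p),\ p+\tfrac13(q-p)+\tfrac13R_{-\pi/3}(q-p),\ p+\tfrac23(q-p),\ q$ (the new tip points outward), and numbering vertices consecutively with $r_1=v_1$. A vertex $r_i$ is a sharp point if the angle $\angle r_{i-1}r_ir_{i+1}$ equals $\pi/3$. For $n\ge2$ the snowflake code is the word $u_n=c_1\cdots c_{6\cdot4^{n-2}}$ over $\{0,1\}$ with $c_j=1$ iff $r_{2j-1}$ is a sharp point (the letter $c_j$ refers to the pair $\{r_{2j-2},r_{2j-1}\}$). Affine curvatures of a closed polygon with vertices $r_1,\dots,r_N$ (indices mod $N$): $t_k=r_{k+1}-r_k$, $[a,b]=a_1b_2-a_2b_1$, and whenever $[t_{k-1},t_k]\ne0$, $\kappa_k=\dfrac{[t_k,t_{k+1}]}{[t_{k-1},t_k]}$, $\bar\kappa_k=\dfrac{[t_{k-1},t_{k+1}]}{[t_{k-1},t_k]}$. *)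

From Stdlib Require Import Reals Lra List ZArith.
Import ListNotations.
Open Scope R_scope.

Definition pt := (R * R)%type.
Definition padd (p q : pt) : pt := (fst p + fst q, snd p + snd q).
Definition psub (p q : pt) : pt := (fst p - fst q, snd p - snd q).
Definition pscale (c : R) (p : pt) : pt := (c * fst p, c * snd p).
Definition dot (a b : pt) : R := fst a * fst b + snd a * snd b.
Definition pnorm (a : pt) : R := sqrt (dot a a).
Definition cross (a b : pt) : R := fst a * snd b - snd a * fst b.

Definition rot (theta : R) (p : pt) : pt :=
  (cos theta * fst p - sin theta * snd p, sin theta * fst p + cos theta * snd p).

(* v1, v2, v3 are the vertices of an equilateral triangle in counterclockwise order *)
Definition equilateral_ccw (v1 v2 v3 : pt) : Prop :=
  v1 <> v2 /\ psub v3 v1 = rot (PI / 3) (psub v2 v1).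

(* the edge p -> q replaced by four edges: vertices p, a, b, c (q starts the next edge) *)
Definition koch_edge (p q : pt) : list pt :=
  let d := psub q p in
  [ p;
    padd p (pscale (1/3) d);
    padd (padd p (pscale (1/3) d)) (pscale (1/3) (rot (- (PI / 3)) d));
    padd p (pscale (2/3) d) ].

(* one refinement step on a closed polygon (list of vertices in cyclic order,
   the closing edge goes from the last vertex to the first) *)
Fixpoint koch_step_aux (first : pt) (l : list pt) : list pt :=
  match l with
  | [] => []
  | [p] => koch_edge p first
  | p :: ((q :: _) as t) => koch_edge p q ++ koch_step_aux first t
  end.

Definition koch_step (l : list pt) : list pt :=
  match l with
  | [] => []
  | p :: _ => koch_step_aux p l
  end.

Definition snowflake (v1 v2 v3 : pt) (n : nat) : list pt :=
  Nat.iter (Nat.pred n) koch_step [v1; v2; v3].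

(* r_i, 1-based, indices taken modulo the number of vertices *)
Definition vert (v1 v2 v3 : pt) (n : nat) (i : Z) : pt :=
  let l := snowflake v1 v2 v3 n in
  nth (Z.to_nat ((i - 1) mod Z.of_nat (length l))) l (0, 0).

Definition angle (a o b : pt) : R :=
  acos (dot (psub a o) (psub b o) / (pnorm (psub a o) * pnorm (psub b o))).

Definition sharp_point (v1 v2 v3 : pt) (n : nat) (i : Z) : Prop :=
  angle (vert v1 v2 v3 n (i - 1)) (vert v1 v2 v3 n i) (vert v1 v2 v3 n (i + 1)) = PI / 3.

Definition sharpb (v1 v2 v3 : pt) (n : nat) (i : Z) : bool :=
  if Req_EM_T (angle (vert v1 v2 v3 n (i - 1)) (vert v1 v2 v3 n i)
                     (vert v1 v2 v3 n (i + 1))) (PI / 3) then true else false.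

Definition code (v1 v2 v3 : pt) (n : nat) : list bool :=
  map (fun j : nat => sharpb v1 v2 v3 n (2 * Z.of_nat j - 1))
      (seq 1 (6 * 4 ^ (n - 2))).

(* invertible affine map p |-> A p + b, A = [[a11 a12];[a21 a22]] *)
Definition affine_map (a11 a12 a21 a22 b1 b2 : R) (p : pt) : pt :=
  (a11 * fst p + a12 * snd p + b1, a21 * fst p + a22 * snd p + b2).

(* affine curvatures of a closed polygon given by its (periodic) vertex function *)
Definition tvec (P : Z -> pt) (k : Z) : pt := psub (P (k + 1)%Z) (P k).
Definition kappa (P : Z -> pt) (k : Z) : R :=
  cross (tvec P k) (tvec P (k + 1)) / cross (tvec P (k - 1)) (tvec P k).
Definition kappabar (P : Z -> pt) (k : Z) : R :=
  cross (tvec P (k - 1)) (tvec P (k + 1)) / cross (tvec P (k - 1)) (tvec P k).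
(* kappa_k and kappabar_k are defined iff this is nonzero *)
Definition kappa_defined (P : Z -> pt) (k : Z) : Prop :=
  cross (tvec P (k - 1)) (tvec P k) <> 0.

Fixpoint repeat_word (w : list bool) (k : nat) : list bool :=
  match k with O => [] | S k' => w ++ repeat_word w k' end.

(* Edge [e] of [S_(m+1)] is [(1/3)^m] times [v2 - v1] rotated by [heading m e * PI/3],
   where the heading is read off the base-4 digits of [e].  Consecutive headings
   differ by [+2] at a sharp vertex and by [-1] elsewhere (modulo a full turn), so
   the interior angle is [PI/3] or [2 PI/3], and the sharp vertices are the tips of
   Koch edges (lowest nonzero digit [2]) and the corners of the triangle.  An affine
   map multiplies every cross product [[t_a, t_b]] by its determinant, so both
   affine curvatures are ratios of sines of sums of turns, hence [+1] or [-1]; the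
   even-indexed vertices are never sharp, which fixes the pattern along the code. *)

From Stdlib Require Import Reals Lra Lia List ZArith Psatz.
Import ListNotations.
Open Scope R_scope.

(** * Plane geometry *)

Lemma pt_ext (a b : pt) : fst a = fst b -> snd a = snd b -> a = b.
Proof. destruct a, b; simpl; intros -> ->; reflexivity. Qed.

Lemma rot_rot a b p : rot a (rot b p) = rot (a + b) p.
Proof.
  destruct p; unfold rot; rewrite cos_plus, sin_plus; apply pt_ext; simpl; ring.
Qed.

Lemma rot_pscale a c p : rot a (pscale c p) = pscale c (rot a p).
Proof. destruct p; unfold rot, pscale; apply pt_ext; simpl; ring. Qed.

Lemma rot_0 p : rot 0 p = p.
Proof. destruct p; unfold rot; rewrite cos_0, sin_0; apply pt_ext; simpl; ring. Qed.

Lemma rot_PI p : rot PI p = pscale (-1) p.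
Proof. destruct p; unfold rot, pscale; rewrite cos_PI, sin_PI; apply pt_ext; simpl; ring. Qed.

(* The identity behind both the equilateral triangle and the tip of each Koch edge. *)
Lemma sub_rot_neg_PI3 x : psub x (rot (- (PI / 3)) x) = rot (PI / 3) x.
Proof.
  destruct x; unfold rot, psub; rewrite cos_neg, sin_neg, cos_PI3.
  apply pt_ext; simpl; field.
Qed.

Lemma pscale_1 p : pscale 1 p = p.
Proof. destruct p; unfold pscale; apply pt_ext; simpl; ring. Qed.

Lemma pscale_pscale c d p : pscale c (pscale d p) = pscale (c * d) p.
Proof. unfold pscale; apply pt_ext; simpl; ring. Qed.

Lemma cross_rot_rot a b x : cross (rot a x) (rot b x) = sin (b - a) * dot x x.
Proof. destruct x; unfold rot, cross, dot; rewrite sin_minus; simpl; ring. Qed.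

Lemma dot_rot_rot a b x : dot (rot a x) (rot b x) = cos (b - a) * dot x x.
Proof. destruct x; unfold rot, dot; rewrite cos_minus; simpl; ring. Qed.

Lemma cross_pscale c d x y : cross (pscale c x) (pscale d y) = c * d * cross x y.
Proof. unfold cross, pscale; simpl; ring. Qed.

Lemma dot_pscale c d x y : dot (pscale c x) (pscale d y) = c * d * dot x y.
Proof. unfold dot, pscale; simpl; ring. Qed.

Lemma dot_self_pos (a b : pt) : a <> b -> 0 < dot (psub b a) (psub b a).
Proof.
  intros Hab; destruct a as [x y], b as [u v]; unfold dot, psub; simpl.
  destruct (Req_dec x u), (Req_dec y v); subst; [now exfalso|nra..].
Qed.

Lemma cross_affine_map a11 a12 a21 a22 b1 b2 p p' q q' :
  cross (psub (affine_map a11 a12 a21 a22 b1 b2 p') (affine_map a11 a12 a21 a22 b1 b2 p))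
        (psub (affine_map a11 a12 a21 a22 b1 b2 q') (affine_map a11 a12 a21 a22 b1 b2 q))
  = (a11 * a22 - a12 * a21) * cross (psub p' p) (psub q' q).
Proof.
  destruct p, p', q, q'; unfold cross, psub, affine_map; simpl; ring.
Qed.

Lemma angle_between_edges o d c a b : 0 < c -> 0 < dot d d ->
  angle (psub o (pscale c (rot a d))) o (padd o (pscale c (rot b d)))
  = acos (- cos (b - a)).
Proof.
  intros Hc Hd; unfold angle, pnorm.
  assert (Hu : forall u : pt, psub (psub o u) o = pscale (-1) u)
    by (intros; unfold psub, pscale; apply pt_ext; simpl; ring).
  assert (Hw : forall w : pt, psub (padd o w) o = w)
    by (intros; unfold psub, padd; apply pt_ext; simpl; ring).
  rewrite Hu, Hw, pscale_pscale, !dot_pscale, !dot_rot_rot, !Rminus_diag, cos_0.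
  replace (-1 * c * (-1 * c) * (1 * dot d d)) with (c * c * dot d d) by ring.
  replace (c * c * (1 * dot d d)) with (c * c * dot d d) by ring.
  rewrite sqrt_sqrt by (apply Rmult_le_pos; nra).
  f_equal; field; split; lra.
Qed.

Lemma sin_PI3_pos : 0 < sin (PI / 3).
Proof. apply sin_gt_0; pose proof PI_RGT_0; lra. Qed.

Lemma cos_2PI3 : cos (2 * (PI / 3)) = - 1 / 2.
Proof.
  replace (2 * (PI / 3)) with (- (PI / 3) + PI) by field.
  rewrite neg_cos, cos_neg, cos_PI3; lra.
Qed.

Lemma sin_2PI3 : sin (2 * (PI / 3)) = sin (PI / 3).
Proof.
  replace (2 * (PI / 3)) with (- (PI / 3) + PI) by field.
  rewrite neg_sin, sin_neg; ring.
Qed.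

Lemma sin_cos_sub_2PI x : sin (x - 2 * PI) = sin x /\ cos (x - 2 * PI) = cos x.
Proof. rewrite sin_minus, cos_minus, sin_2PI, cos_2PI; split; ring. Qed.

(** * One refinement step *)

Lemma div_mod_4 q r : (r < 4)%nat -> ((4 * q + r) / 4 = q /\ (4 * q + r) mod 4 = r)%nat.
Proof.
  intros Hr; split.
  - symmetry; apply (Nat.div_unique _ _ _ r); lia.
  - symmetry; apply (Nat.mod_unique _ _ q); lia.
Qed.

Lemma koch_step_aux_cons first p t :
  koch_step_aux first (p :: t) = koch_edge p (hd first t) ++ koch_step_aux first t.
Proof. destruct t; reflexivity. Qed.

Lemma length_koch_step_aux first l :
  length (koch_step_aux first l) = (4 * length l)%nat.
Proof.
  induction l as [|p t IH]; [reflexivity|].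
  rewrite koch_step_aux_cons, length_app, IH; simpl; lia.
Qed.

Lemma length_koch_step l : length (koch_step l) = (4 * length l)%nat.
Proof. destruct l; [reflexivity|]; apply length_koch_step_aux. Qed.

Lemma nth_koch_step_aux first l d i r : (i < length l)%nat -> (r < 4)%nat ->
  nth (4 * i + r) (koch_step_aux first l) d
  = nth r (koch_edge (nth i l d) (nth (S i) l first)) d.
Proof.
  revert i; induction l as [|p t IH]; intros i Hi Hr; simpl in Hi; [lia|].
  rewrite koch_step_aux_cons; destruct i as [|i].
  - rewrite app_nth1 by (simpl; lia); destruct t; reflexivity.
  - rewrite app_nth2 by (simpl; lia).
    replace (4 * S i + r - length (koch_edge p (hd first t)))%nat with (4 * i + r)%nat
      by (simpl; lia).
    apply IH; lia.
Qed.

Lemma nth_koch_step l d i r : (i < length l)%nat -> (r < 4)%nat ->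
  nth (4 * i + r) (koch_step l) d
  = nth r (koch_edge (nth i l d) (nth ((i + 1) mod length l) l d)) d.
Proof.
  intros Hi Hr; destruct l as [|p t]; [simpl in Hi; lia|].
  unfold koch_step; rewrite nth_koch_step_aux by assumption.
  destruct (Nat.eq_dec (S i) (length (p :: t))) as [E|E].
  - rewrite (nth_overflow (p :: t) p (n := S i)) by lia.
    rewrite Nat.add_1_r, E, Nat.Div0.mod_same; reflexivity.
  - rewrite Nat.mod_small, Nat.add_1_r by lia; do 2 f_equal; apply nth_indep; lia.
Qed.

(* Appending the endpoint [q] lets the case [r = 3], which crosses into the
   next Koch edge, be stated uniformly. *)
Lemma nth_koch_step_succ l d i r : (i < length l)%nat -> (r < 4)%nat ->
  let q := nth ((i + 1) mod length l) l d in
  nth ((4 * i + r + 1) mod (4 * length l)) (koch_step l) d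
  = nth (S r) (koch_edge (nth i l d) q ++ [q]) d.
Proof.
  intros Hi Hr q.
  destruct (Nat.eq_dec r 3) as [->|Hr3].
  - replace (4 * i + 3 + 1)%nat with (4 * (i + 1) + 0)%nat by lia.
    rewrite Nat.add_0_r, Nat.Div0.mul_mod_distr_l, <- (Nat.add_0_r (4 * _)).
    rewrite nth_koch_step by (try apply Nat.mod_upper_bound; lia); reflexivity.
  - rewrite Nat.mod_small by lia.
    replace (4 * i + r + 1)%nat with (4 * i + S r)%nat by lia.
    rewrite nth_koch_step, app_nth1 by (simpl; lia); reflexivity.
Qed.

Definition heading_shift (r : nat) : Z :=
  match r with 1%nat => (-1)%Z | 2%nat => 1%Z | _ => 0%Z end.

Lemma koch_edge_vector p q r : (r < 4)%nat ->
  psub (nth (S r) (koch_edge p q ++ [q]) (0, 0)) (nth r (koch_edge p q) (0, 0))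
  = pscale (1 / 3) (rot (IZR (heading_shift r) * (PI / 3)) (psub q p)).
Proof.
  intros Hr; unfold koch_edge.
  destruct r as [|[|[|[|r]]]]; [| | | |lia]; simpl nth; simpl IZR.
  all: rewrite ?Rmult_0_l, ?rot_0.
  - apply pt_ext; unfold psub, padd, pscale; simpl; ring.
  - replace (-1 * (PI / 3)) with (- (PI / 3)) by ring.
    apply pt_ext; unfold psub, padd, pscale; simpl; ring.
  - rewrite Rmult_1_l, <- sub_rot_neg_PI3.
    set (u := rot _ _); clearbody u.
    apply pt_ext; unfold psub, padd, pscale; simpl; field.
  - apply pt_ext; unfold psub, padd, pscale; simpl; field.
Qed.

(* Edge [e] of [S_(m+1)] (0-based, from [r_(e+1)] to [r_(e+2)]) has direction
   [heading m e * PI/3] relative to [v2 - v1]: the leading base-4 digit of [e]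
   selects a side of the triangle, each of the [m] lower digits one of the four
   pieces of a Koch edge. *)
Fixpoint heading (m e : nat) : Z :=
  match m with
  | O => (2 * Z.of_nat e)%Z
  | S m' => (heading m' (e / 4) + heading_shift (e mod 4))%Z
  end.

(* Vertex [r_(e+1)] of [S_(m+1)] is sharp iff the lowest nonzero one of the
   [m] lower base-4 digits of [e] is a 2 (tip of a Koch edge), or all of them
   vanish (corner of the initial triangle). *)
Fixpoint sharp_vertex (m e : nat) : bool :=
  match m with
  | O => true
  | S m' =>
      match (e mod 4)%nat with
      | 0%nat => sharp_vertex m' (e / 4)
      | 2%nat => true
      | _ => false
      end
  end.

Lemma heading_digit m q r : (r < 4)%nat ->
  heading (S m) (4 * q + r) = (heading m q + heading_shift r)%Z.
Proof. intros Hr; cbn [heading]; destruct (div_mod_4 q r Hr) as [-> ->]; reflexivity. Qed.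

Lemma sharp_vertex_digit m q r : (r < 4)%nat ->
  sharp_vertex (S m) (4 * q + r)
  = match r with 0%nat => sharp_vertex m q | 2%nat => true | _ => false end.
Proof.
  intros Hr; cbn [sharp_vertex]; destruct (div_mod_4 q r Hr) as [-> ->]; reflexivity.
Qed.

Lemma length_snowflake v1 v2 v3 m :
  length (snowflake v1 v2 v3 (S m)) = (3 * 4 ^ m)%nat.
Proof.
  induction m as [|m IH]; [reflexivity|].
  change (snowflake v1 v2 v3 (S (S m))) with (koch_step (snowflake v1 v2 v3 (S m))).
  rewrite length_koch_step, IH, Nat.pow_succ_r'; lia.
Qed.

Lemma snowflake_edge v1 v2 v3 m e : equilateral_ccw v1 v2 v3 -> (e < 3 * 4 ^ m)%nat ->
  let L := snowflake v1 v2 v3 (S m) in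
  psub (nth ((e + 1) mod (3 * 4 ^ m)) L (0, 0)) (nth e L (0, 0))
  = pscale ((1 / 3) ^ m) (rot (IZR (heading m e) * (PI / 3)) (psub v2 v1)).
Proof.
  intros [Hne Heq]; revert e; induction m as [|m IH]; intros e He L.
  - destruct e as [|[|[|e]]]; [| | |simpl in He; lia]; subst L; simpl.
    + rewrite Rmult_0_l, rot_0, pscale_1; reflexivity.
    + replace (2 * (PI / 3)) with (PI + - (PI / 3)) by field.
      rewrite <- rot_rot, rot_PI, pscale_pscale.
      rewrite <- sub_rot_neg_PI3 in Heq; set (u := rot _ _) in *; clearbody u.
      destruct v1, v2, v3, u; unfold psub, pscale in *; simpl in *.
      injection Heq as H1 H2; apply pt_ext; simpl; lra.
    + replace (4 * (PI / 3)) with (PI + PI / 3) by field.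
      rewrite <- rot_rot, rot_PI, pscale_pscale, <- Heq.
      apply pt_ext; unfold psub, pscale; simpl; ring.
  - pose proof (length_snowflake v1 v2 v3 m) as HN.
    set (K := snowflake v1 v2 v3 (S m)) in HN.
    change L with (koch_step K).
    rewrite (Nat.div_mod_eq e 4) in He |- *.
    set (i := (e / 4)%nat); set (r := (e mod 4)%nat).
    assert (Hr : (r < 4)%nat) by (apply Nat.mod_upper_bound; lia).
    assert (Hi : (i < length K)%nat) by (rewrite HN, Nat.pow_succ_r' in *; lia).
    replace (3 * 4 ^ S m)%nat with (4 * length K)%nat by (rewrite HN, Nat.pow_succ_r'; lia).
    rewrite nth_koch_step_succ, nth_koch_step, koch_edge_vector by assumption.
    rewrite HN, IH, heading_digit, rot_pscale, rot_rot, pscale_pscale, plus_IZR by lia.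
    simpl pow; do 2 f_equal; ring.
Qed.

(** * Turns between consecutive edges *)

Lemma heading_succ m e :
  (heading m (S e) - heading m e = if sharp_vertex m (S e) then 2 else -1)%Z.
Proof.
  revert e; induction m as [|m IH]; intros e; [cbn [heading sharp_vertex]; lia|].
  rewrite (Nat.div_mod_eq e 4).
  assert (Hr : (e mod 4 < 4)%nat) by (apply Nat.mod_upper_bound; lia).
  set (q := (e / 4)%nat); set (r := (e mod 4)%nat) in Hr |- *.
  destruct r as [|[|[|[|r]]]]; [| | | |lia].
  - replace (S (4 * q + 0)) with (4 * q + 1)%nat by lia.
    rewrite !heading_digit, sharp_vertex_digit by lia; simpl; lia.
  - replace (S (4 * q + 1)) with (4 * q + 2)%nat by lia.
    rewrite !heading_digit, sharp_vertex_digit by lia; simpl; lia.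
  - replace (S (4 * q + 2)) with (4 * q + 3)%nat by lia.
    rewrite !heading_digit, sharp_vertex_digit by lia; simpl; lia.
  - replace (S (4 * q + 3)) with (4 * S q + 0)%nat by lia.
    rewrite !heading_digit, sharp_vertex_digit by lia.
    specialize (IH q); simpl heading_shift; lia.
Qed.

Lemma heading_0 m : heading m 0 = 0%Z.
Proof. induction m as [|m IH]; [reflexivity|]; simpl; rewrite IH; reflexivity. Qed.

Lemma sharp_vertex_0 m : sharp_vertex m 0 = true.
Proof. induction m as [|m IH]; [reflexivity|]; exact IH. Qed.

Lemma heading_last m : heading m (3 * 4 ^ m - 1) = 4%Z.
Proof.
  induction m as [|m IH]; [reflexivity|].
  replace (3 * 4 ^ S m - 1)%nat with (4 * (3 * 4 ^ m - 1) + 3)%nat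
    by (pose proof (Nat.pow_nonzero 4 m); rewrite Nat.pow_succ_r'; lia).
  rewrite heading_digit, IH by lia; reflexivity.
Qed.

(* Going once around [S_(m+1)] the heading grows by 6, i.e. by one full turn. *)
Lemma heading_turn m e : (e < 3 * 4 ^ m)%nat ->
  let e' := ((e + 1) mod (3 * 4 ^ m))%nat in
  let t := if sharp_vertex m e' then 2%Z else (-1)%Z in
  heading m e' = (heading m e + t)%Z \/ heading m e' = (heading m e + t - 6)%Z.
Proof.
  intros He e' t; subst e' t.
  destruct (Nat.eq_dec (e + 1) (3 * 4 ^ m)) as [E|E].
  - rewrite E, Nat.Div0.mod_same, heading_0, sharp_vertex_0.
    replace e with (3 * 4 ^ m - 1)%nat by lia; rewrite heading_last; right; lia.
  - rewrite Nat.mod_small, Nat.add_1_r by lia.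
    pose proof (heading_succ m e); left; lia.
Qed.

Definition vertex_index (N : nat) (k : Z) : nat := Z.to_nat ((k - 1) mod Z.of_nat N).

Lemma vertex_index_lt N k : (0 < N)%nat -> (vertex_index N k < N)%nat.
Proof.
  intros HN; unfold vertex_index.
  pose proof (Z.mod_pos_bound (k - 1) (Z.of_nat N)); lia.
Qed.

Lemma vertex_index_succ N k : (0 < N)%nat ->
  vertex_index N (k + 1) = ((vertex_index N k + 1) mod N)%nat.
Proof.
  intros HN; unfold vertex_index.
  pose proof (Z.mod_pos_bound (k - 1) (Z.of_nat N)) as Hb.
  replace (k + 1 - 1)%Z with ((k - 1) + 1)%Z by ring.
  rewrite <- Z.add_mod_idemp_l by lia.
  apply Nat2Z.inj; rewrite Nat2Z.inj_mod, Nat2Z.inj_add, !Z2Nat.id; [reflexivity|lia|].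
  apply Z.mod_pos_bound; lia.
Qed.

Lemma vertex_index_of_nat N M : (1 <= M <= N)%nat -> vertex_index N (Z.of_nat M) = (M - 1)%nat.
Proof. intros H; unfold vertex_index; rewrite Z.mod_small; lia. Qed.

Lemma vert_snowflake v1 v2 v3 m k :
  vert v1 v2 v3 (S m) k
  = nth (vertex_index (3 * 4 ^ m) k) (snowflake v1 v2 v3 (S m)) (0, 0).
Proof. unfold vert; rewrite length_snowflake; reflexivity. Qed.

Lemma pow4_pos m : (0 < 4 ^ m)%nat.
Proof. pose proof (Nat.pow_nonzero 4 m); lia. Qed.

Definition edge_angle (m : nat) (k : Z) : R :=
  IZR (heading m (vertex_index (3 * 4 ^ m) k)) * (PI / 3).

Lemma vert_edge v1 v2 v3 m k : equilateral_ccw v1 v2 v3 ->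
  psub (vert v1 v2 v3 (S m) (k + 1)) (vert v1 v2 v3 (S m) k)
  = pscale ((1 / 3) ^ m) (rot (edge_angle m k) (psub v2 v1)).
Proof.
  intros He; pose proof (pow4_pos m).
  rewrite !vert_snowflake, vertex_index_succ by lia.
  apply snowflake_edge, vertex_index_lt; [assumption|lia].
Qed.

Definition turn_sign (b : bool) : R := if b then 1 else -1.

Definition vertex_sign (m : nat) (k : Z) : R :=
  turn_sign (sharp_vertex m (vertex_index (3 * 4 ^ m) k)).

Lemma sin_cos_turn (b : bool) d :
  let t := (if b then 2 else -1) * (PI / 3) in d = t \/ d = t - 2 * PI ->
  sin d = turn_sign b * sin (PI / 3) /\ cos d = - turn_sign b / 2.
Proof.
  intros t [-> | ->]; rewrite ?(proj1 (sin_cos_sub_2PI _)), ?(proj2 (sin_cos_sub_2PI _));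
    subst t; destruct b; unfold turn_sign.
  all: first [ rewrite sin_2PI3, cos_2PI3; split; lra
             | replace (-1 * (PI / 3)) with (- (PI / 3)) by ring;
               rewrite sin_neg, cos_neg, cos_PI3; split; lra ].
Qed.

Lemma sin_cos_edge_turn m k :
  sin (edge_angle m k - edge_angle m (k - 1)) = vertex_sign m k * sin (PI / 3) /\
  cos (edge_angle m k - edge_angle m (k - 1)) = - vertex_sign m k / 2.
Proof.
  pose proof (pow4_pos m).
  unfold edge_angle, vertex_sign.
  assert (Hk : vertex_index (3 * 4 ^ m) k
               = ((vertex_index (3 * 4 ^ m) (k - 1) + 1) mod (3 * 4 ^ m))%nat)
    by (rewrite <- vertex_index_succ by lia; f_equal; ring).
  rewrite Hk; apply sin_cos_turn.
  destruct (heading_turn m (vertex_index (3 * 4 ^ m) (k - 1))) as [E|E];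
    [apply vertex_index_lt; lia| left | right]; rewrite E.
  all: destruct sharp_vertex; rewrite ?minus_IZR, plus_IZR; simpl IZR; field.
Qed.

(** * Angles and affine curvatures *)

Lemma sharp_point_iff v1 v2 v3 m k : equilateral_ccw v1 v2 v3 ->
  sharp_point v1 v2 v3 (S m) k <-> sharp_vertex m (vertex_index (3 * 4 ^ m) k) = true.
Proof.
  intros He; unfold sharp_point.
  assert (Hd : 0 < dot (psub v2 v1) (psub v2 v1)) by (apply dot_self_pos, He).
  assert (Hc : 0 < (1 / 3) ^ m) by (apply pow_lt; lra).
  assert (Hprev : vert v1 v2 v3 (S m) (k - 1)
    = psub (vert v1 v2 v3 (S m) k) (pscale ((1 / 3) ^ m) (rot (edge_angle m (k - 1)) (psub v2 v1)))).
  { rewrite <- (vert_edge v1 v2 v3) by assumption; replace (k - 1 + 1)%Z with k by ring.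
    apply pt_ext; unfold psub; simpl; ring. }
  assert (Hnext : vert v1 v2 v3 (S m) (k + 1)
    = padd (vert v1 v2 v3 (S m) k) (pscale ((1 / 3) ^ m) (rot (edge_angle m k) (psub v2 v1)))).
  { rewrite <- (vert_edge v1 v2 v3) by assumption; apply pt_ext; unfold psub, padd; simpl; ring. }
  rewrite Hprev, Hnext, angle_between_edges by assumption.
  destruct (sin_cos_edge_turn m k) as [_ ->]; unfold vertex_sign, turn_sign.
  pose proof PI_RGT_0; destruct sharp_vertex; split; intros Hsharp; try reflexivity.
  - replace (acos _) with (acos (cos (PI / 3))) by (rewrite cos_PI3; f_equal; field).
    apply acos_cos; lra.
  - revert Hsharp; replace (acos _) with (acos (cos (2 * (PI / 3))))
      by (rewrite cos_2PI3; f_equal; field).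
    rewrite acos_cos by lra; lra.
  - discriminate.
Qed.

Lemma cross_affine_edges v1 v2 v3 m a11 a12 a21 a22 b1 b2 a b : equilateral_ccw v1 v2 v3 ->
  let P := fun i => affine_map a11 a12 a21 a22 b1 b2 (vert v1 v2 v3 (S m) i) in
  cross (tvec P a) (tvec P b)
  = (a11 * a22 - a12 * a21) * ((1 / 3) ^ m * (1 / 3) ^ m * dot (psub v2 v1) (psub v2 v1))
    * sin (edge_angle m b - edge_angle m a).
Proof.
  intros He P; unfold tvec, P.
  rewrite cross_affine_map, !vert_edge, cross_pscale, cross_rot_rot by assumption; ring.
Qed.

Lemma affine_snowflake_curvatures v1 v2 v3 m a11 a12 a21 a22 b1 b2 k :
  equilateral_ccw v1 v2 v3 -> a11 * a22 - a12 * a21 <> 0 ->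
  let P := fun i => affine_map a11 a12 a21 a22 b1 b2 (vert v1 v2 v3 (S m) i) in
  kappa_defined P k /\ kappa P k = vertex_sign m (k + 1) / vertex_sign m k
  /\ kappabar P k = - vertex_sign m (k + 1).
Proof.
  intros He Hdet P.
  assert (Hd : 0 < dot (psub v2 v1) (psub v2 v1)) by (apply dot_self_pos, He).
  assert (Hc : 0 < (1 / 3) ^ m) by (apply pow_lt; lra).
  assert (HC : (a11 * a22 - a12 * a21) * ((1 / 3) ^ m * (1 / 3) ^ m * dot (psub v2 v1) (psub v2 v1)) <> 0)
    by (apply Rmult_integral_contrapositive_currified; [assumption|];
        apply Rgt_not_eq, Rmult_lt_0_compat; [apply Rmult_lt_0_compat|]; assumption).
  pose proof sin_PI3_pos.
  destruct (sin_cos_edge_turn m k) as [Sk Ck].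
  destruct (sin_cos_edge_turn m (k + 1)) as [Sk1 Ck1].
  replace (k + 1 - 1)%Z with k in Sk1, Ck1 by ring.
  unfold kappa_defined, kappa, kappabar, P; rewrite !cross_affine_edges by assumption.
  replace (edge_angle m (k + 1) - edge_angle m (k - 1))
    with ((edge_angle m (k + 1) - edge_angle m k) + (edge_angle m k - edge_angle m (k - 1)))
    by ring.
  rewrite sin_plus, Sk, Ck, Sk1, Ck1; unfold vertex_sign, turn_sign.
  set (C := _ * (_ * _ * _)) in *; clearbody C.
  destruct (sharp_vertex m (vertex_index _ k)), (sharp_vertex m (vertex_index _ (k + 1)));
    repeat split; first [apply Rmult_integral_contrapositive_currified; lra | field; lra].
Qed.

(** * Position of the sharp points *)

Definition koch_tip_index (m e : nat) : Prop :=
  exists l k, (l < m)%nat /\ (1 <= k <= 3 * 4 ^ (m - 1 - l))%nat /\ e = (4 ^ l * (4 * k - 2))%nat.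

Definition corner_index (m e : nat) : Prop :=
  exists k, (1 <= k <= 3)%nat /\ e = (4 ^ m * (k - 1))%nat.

Lemma koch_tip_index_mul4 m q : koch_tip_index (S m) (4 * q) <-> koch_tip_index m q.
Proof.
  split.
  - intros (l & k & Hl & Hk & Hq); destruct l as [|l]; [simpl in Hq; lia|].
    rewrite Nat.pow_succ_r', <- Nat.mul_assoc in Hq.
    exists l, k; replace (m - 1 - l)%nat with (S m - 1 - S l)%nat by lia.
    repeat split; lia.
  - intros (l & k & Hl & Hk & Hq); exists (S l), k.
    rewrite Nat.pow_succ_r', <- Nat.mul_assoc.
    replace (S m - 1 - S l)%nat with (m - 1 - l)%nat by lia.
    repeat split; lia.
Qed.

Lemma corner_index_mul4 m q : corner_index (S m) (4 * q) <-> corner_index m q.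
Proof.
  unfold corner_index; rewrite Nat.pow_succ_r'.
  split; intros (k & Hk & Hq); exists k; split; try assumption; lia.
Qed.

Lemma koch_tip_index_2 m q : (q < 3 * 4 ^ m)%nat -> koch_tip_index (S m) (4 * q + 2).
Proof.
  intros Hq; exists 0%nat, (S q); simpl Nat.pow; rewrite !Nat.sub_0_r; repeat split; lia.
Qed.

Lemma sharp_index_mod4 m e :
  koch_tip_index (S m) e \/ corner_index (S m) e -> (e mod 4 = 0 \/ e mod 4 = 2)%nat.
Proof.
  intros [(l & k & _ & Hk & ->) | (k & _ & ->)].
  - destruct l as [|l].
    + right; simpl Nat.pow; replace (1 * (4 * k - 2))%nat with (4 * (k - 1) + 2)%nat by lia.
      apply div_mod_4; lia.
    + left; rewrite Nat.pow_succ_r', <- Nat.mul_assoc, Nat.mul_comm; apply Nat.Div0.mod_mul.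
  - left; rewrite Nat.pow_succ_r', <- Nat.mul_assoc, Nat.mul_comm; apply Nat.Div0.mod_mul.
Qed.

Lemma sharp_vertex_iff m e : (e < 3 * 4 ^ m)%nat ->
  sharp_vertex m e = true <-> koch_tip_index m e \/ corner_index m e.
Proof.
  revert e; induction m as [|m IH]; intros e He.
  - split; [|reflexivity]; intros _; right; exists (S e); simpl in *; split; lia.
  - rewrite (Nat.div_mod_eq e 4) in He |- *.
    assert (Hr : (e mod 4 < 4)%nat) by (apply Nat.mod_upper_bound; lia).
    set (q := (e / 4)%nat) in *; set (r := (e mod 4)%nat) in *.
    assert (Hq : (q < 3 * 4 ^ m)%nat) by (rewrite Nat.pow_succ_r' in He; lia).
    rewrite sharp_vertex_digit by assumption.
    assert (Hodd : r = 1%nat \/ r = 3%nat ->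
                   ~ (koch_tip_index (S m) (4 * q + r) \/ corner_index (S m) (4 * q + r))).
    { intros Hr13 Hs; apply sharp_index_mod4 in Hs.
      destruct (div_mod_4 q r Hr) as [_ E]; rewrite E in Hs; lia. }
    destruct r as [|[|[|[|r]]]]; [| | | |lia].
    + rewrite Nat.add_0_r, koch_tip_index_mul4, corner_index_mul4; apply IH, Hq.
    + split; [discriminate|]; intros Hs; exfalso; apply Hodd in Hs; [assumption|lia].
    + split; [intros _; left; apply koch_tip_index_2, Hq|reflexivity].
    + split; [discriminate|]; intros Hs; exfalso; apply Hodd in Hs; [assumption|lia].
Qed.

(** * The snowflake code *)

Lemma sharp_vertex_odd m a : sharp_vertex (S m) (2 * a + 1) = false.
Proof.
  destruct (Nat.Even_or_Odd a) as [[b ->] | [b ->]].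
  - replace (2 * (2 * b) + 1)%nat with (4 * b + 1)%nat by lia.
    rewrite sharp_vertex_digit by lia; reflexivity.
  - replace (2 * (2 * b + 1) + 1)%nat with (4 * b + 3)%nat by lia.
    rewrite sharp_vertex_digit by lia; reflexivity.
Qed.

Lemma sharp_vertex_even_index m k :
  sharp_vertex (S m) (vertex_index (3 * 4 ^ S m) (2 * k)) = false.
Proof.
  pose proof (pow4_pos m) as Hp.
  set (M := Z.of_nat (6 * 4 ^ m)).
  assert (HM : (0 < M)%Z) by (unfold M; lia).
  replace (vertex_index (3 * 4 ^ S m) (2 * k)) with (2 * Z.to_nat ((k - 1) mod M) + 1)%nat.
  { apply sharp_vertex_odd. }
  unfold vertex_index.
  replace (Z.of_nat (3 * 4 ^ S m)) with (2 * M)%Z by (unfold M; rewrite Nat.pow_succ_r'; lia).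
  pose proof (Z.mod_pos_bound (k - 1) M HM).
  rewrite <- (Z.mod_unique (2 * k - 1) (2 * M) ((k - 1) / M) (2 * ((k - 1) mod M) + 1)); [lia|lia|].
  pose proof (Z.div_mod (k - 1) M); lia.
Qed.

Lemma sharpb_true_iff v1 v2 v3 n i : sharpb v1 v2 v3 n i = true <-> sharp_point v1 v2 v3 n i.
Proof. unfold sharpb, sharp_point; destruct Req_EM_T; split; congruence. Qed.

Lemma code_snowflake v1 v2 v3 m : equilateral_ccw v1 v2 v3 ->
  code v1 v2 v3 (S (S m)) = map (fun j => sharp_vertex (S m) (2 * j - 2)) (seq 1 (6 * 4 ^ m)).
Proof.
  intros He; unfold code; rewrite Nat.sub_succ, Nat.sub_succ, Nat.sub_0_r.
  apply map_ext_in; intros j Hj; apply in_seq in Hj.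
  replace (2 * Z.of_nat j - 1)%Z with (Z.of_nat (2 * j - 1)) by lia.
  apply Bool.eq_iff_eq_true; rewrite sharpb_true_iff, sharp_point_iff by assumption.
  rewrite vertex_index_of_nat by (rewrite Nat.pow_succ_r'; lia).
  replace (2 * j - 1 - 1)%nat with (2 * j - 2)%nat by lia; reflexivity.
Qed.

Lemma nth_map_seq1 {A} (f : nat -> A) L j d : (1 <= j <= L)%nat ->
  nth (j - 1) (map f (seq 1 L)) d = f j.
Proof.
  intros Hj; rewrite nth_indep with (d' := f 0%nat) by (rewrite length_map, length_seq; lia).
  rewrite map_nth, seq_nth by lia; f_equal; lia.
Qed.

(* Letter [j] is read at vertex [2j-2] (0-based); its four refinements are the
   vertices [4(2j-2)], [4(2j-2)+2], [4(2j-1)], [4(2j-1)+2]: the old letter, a tip,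
   an odd vertex and a tip. *)
Lemma code_refine m K :
  map (fun j => sharp_vertex (S (S m)) (2 * j - 2)) (seq 1 (4 * K))
  = flat_map (fun c => [c; true; false; true])
      (map (fun j => sharp_vertex (S m) (2 * j - 2)) (seq 1 K)).
Proof.
  induction K as [|K IH]; [reflexivity|].
  replace (4 * S K)%nat with (4 * K + 4)%nat by lia; replace (S K) with (K + 1)%nat by lia.
  rewrite !seq_app, !map_app, flat_map_app, IH; f_equal.
  cbn [seq map flat_map app].
  replace (2 * (1 + 4 * K) - 2)%nat with (4 * (2 * K) + 0)%nat by lia.
  replace (2 * S (1 + 4 * K) - 2)%nat with (4 * (2 * K) + 2)%nat by lia.
  replace (2 * S (S (1 + 4 * K)) - 2)%nat with (4 * (2 * K + 1) + 0)%nat by lia.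
  replace (2 * S (S (S (1 + 4 * K))) - 2)%nat with (4 * (2 * K + 1) + 2)%nat by lia.
  rewrite !sharp_vertex_digit, sharp_vertex_odd by lia.
  replace (2 * (1 + K) - 2)%nat with (2 * K)%nat by lia; reflexivity.
Qed.

Lemma sharp_points_snowflake v1 v2 v3 n M :
  equilateral_ccw v1 v2 v3 -> (2 <= n)%nat -> (1 <= M <= 3 * 4 ^ (n - 1))%nat ->
  sharp_point v1 v2 v3 n (Z.of_nat M) <->
  (exists l k : nat, (l <= n - 2)%nat /\ (1 <= k <= 3 * 4 ^ (n - 2 - l))%nat /\
     M = (4 ^ l * (4 * k - 2) + 1)%nat)
  \/ (exists k : nat, (1 <= k <= 3)%nat /\ M = (4 ^ (n - 1) * (k - 1) + 1)%nat).
Proof.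
  intros He Hn HM; destruct n as [|m]; [lia|].
  replace (S m - 1)%nat with m in * by lia; change (S m - 2)%nat with (m - 1)%nat.
  rewrite sharp_point_iff, vertex_index_of_nat, sharp_vertex_iff by (assumption || lia).
  unfold koch_tip_index, corner_index.
  split; intros [(l & k & Hl & Hk & HM') | (k & Hk & HM')];
    [left; exists l, k | right; exists k | left; exists l, k | right; exists k];
    repeat split; lia.
Qed.

Lemma code_letter_curvatures v1 v2 v3 n a11 a12 a21 a22 b1 b2 j :
  equilateral_ccw v1 v2 v3 -> (2 <= n)%nat -> a11 * a22 - a12 * a21 <> 0 ->
  (1 <= j <= 6 * 4 ^ (n - 2))%nat ->
  let P := fun i : Z => affine_map a11 a12 a21 a22 b1 b2 (vert v1 v2 v3 n i) in
  let s := turn_sign (nth (j - 1) (code v1 v2 v3 n) false) in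
  kappa_defined P (2 * Z.of_nat j - 2) /\ kappa_defined P (2 * Z.of_nat j - 1) /\
  kappa P (2 * Z.of_nat j - 2) = - s /\ kappa P (2 * Z.of_nat j - 1) = - s /\
  kappabar P (2 * Z.of_nat j - 2) = - s /\ kappabar P (2 * Z.of_nat j - 1) = 1.
Proof.
  intros He Hn Hdet Hj P s; subst P.
  destruct n as [|[|m]]; [lia|lia|].
  replace (S (S m) - 2)%nat with m in Hj by lia.
  assert (Hs : s = vertex_sign (S m) (2 * Z.of_nat j - 1)).
  { unfold s, vertex_sign; rewrite code_snowflake, nth_map_seq1 by assumption.
    replace (2 * Z.of_nat j - 1)%Z with (Z.of_nat (2 * j - 1)) by lia.
    rewrite (vertex_index_of_nat _ (2 * j - 1)) by (rewrite Nat.pow_succ_r'; lia).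
    replace (2 * j - 1 - 1)%nat with (2 * j - 2)%nat by lia; reflexivity. }
  assert (Hodd : forall i, vertex_sign (S m) (2 * i) = -1)
    by (intros i; unfold vertex_sign; rewrite sharp_vertex_even_index; reflexivity).
  destruct (affine_snowflake_curvatures v1 v2 v3 (S m) a11 a12 a21 a22 b1 b2
              (2 * Z.of_nat j - 2) He Hdet) as (D1 & K1 & B1).
  destruct (affine_snowflake_curvatures v1 v2 v3 (S m) a11 a12 a21 a22 b1 b2
              (2 * Z.of_nat j - 1) He Hdet) as (D2 & K2 & B2).
  replace (2 * Z.of_nat j - 2 + 1)%Z with (2 * Z.of_nat j - 1)%Z in K1, B1 by ring.
  replace (2 * Z.of_nat j - 1 + 1)%Z with (2 * Z.of_nat j)%Z in K2, B2 by ring.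
  assert (Hprev : vertex_sign (S m) (2 * Z.of_nat j - 2) = -1)
    by (replace (2 * Z.of_nat j - 2)%Z with (2 * (Z.of_nat j - 1))%Z by ring; apply Hodd).
  rewrite <- Hs in K1, K2, B1; rewrite Hprev in K1; rewrite Hodd in K2, B2.
  repeat split; try assumption; rewrite ?K1, ?K2, ?B2.
  all: unfold s, turn_sign; destruct nth; field.
Qed.

Lemma code_succ v1 v2 v3 n : equilateral_ccw v1 v2 v3 -> (2 <= n)%nat ->
  code v1 v2 v3 (S n) = flat_map (fun c => [c; true; false; true]) (code v1 v2 v3 n).
Proof.
  intros He Hn; destruct n as [|[|m]]; [lia|lia|].
  rewrite !code_snowflake by assumption.
  replace (6 * 4 ^ S m)%nat with (4 * (6 * 4 ^ m))%nat by (rewrite Nat.pow_succ_r'; lia).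
  apply code_refine.
Qed.

Lemma length_code v1 v2 v3 n : length (code v1 v2 v3 n) = (6 * 4 ^ (n - 2))%nat.
Proof. unfold code; rewrite length_map, length_seq; reflexivity. Qed.

Theorem mainTheorem6 (v1 v2 v3 : pt) (n : nat) :
  equilateral_ccw v1 v2 v3 -> (2 <= n)%nat ->
  (* (i) *)
  (forall m : nat, (1 <= m <= 3 * 4 ^ (n - 1))%nat ->
     (sharp_point v1 v2 v3 n (Z.of_nat m) <->
       ((exists l k : nat, (l <= n - 2)%nat /\ (1 <= k <= 3 * 4 ^ (n - 2 - l))%nat /\
            m = (4 ^ l * (4 * k - 2) + 1)%nat)
        \/ (exists k : nat, (1 <= k <= 3)%nat /\ m = (4 ^ (n - 1) * (k - 1) + 1)%nat)))) /\
  (* (ii) *)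
  (forall (a11 a12 a21 a22 b1 b2 : R), a11 * a22 - a12 * a21 <> 0 ->
     let P := fun i : Z => affine_map a11 a12 a21 a22 b1 b2 (vert v1 v2 v3 n i) in
     (forall j : nat, (1 <= j <= 6 * 4 ^ (n - 2))%nat ->
        let k1 := (2 * Z.of_nat j - 2)%Z in
        let k2 := (2 * Z.of_nat j - 1)%Z in
        (nth (j - 1) (code v1 v2 v3 n) false = true ->
           kappa_defined P k1 /\ kappa_defined P k2 /\
           kappa P k1 = -1 /\ kappa P k2 = -1 /\
           kappabar P k1 = -1 /\ kappabar P k2 = 1) /\
        (nth (j - 1) (code v1 v2 v3 n) false = false ->
           kappa_defined P k1 /\ kappa_defined P k2 /\
           kappa P k1 = 1 /\ kappa P k2 = 1 /\
           kappabar P k1 = 1 /\ kappabar P k2 = 1))) /\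
  (* (iii) *)
  code v1 v2 v3 2 = [true; true; true; true; true; true] /\
  code v1 v2 v3 (S n) = flat_map (fun c => [c; true; false; true]) (code v1 v2 v3 n) /\
  code v1 v2 v3 3 = repeat_word [true; true; false; true] 6 /\
  length (code v1 v2 v3 n) = (6 * 4 ^ (n - 2))%nat.
Proof.
  intros He Hn; split; [|split; [|split; [|split; [|split]]]].
  - intros m Hm; apply sharp_points_snowflake; assumption.
  - intros a11 a12 a21 a22 b1 b2 Hdet P j Hj k1 k2.
    destruct (code_letter_curvatures v1 v2 v3 n a11 a12 a21 a22 b1 b2 j He Hn Hdet Hj)
      as (D1 & D2 & K1 & K2 & B1 & B2).
    subst P k1 k2; unfold turn_sign in *.
    split; intros Hc; rewrite Hc in *; repeat split; try assumption; lra.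
  - rewrite (code_snowflake v1 v2 v3 0) by assumption; reflexivity.
  - apply code_succ; assumption.
  - rewrite (code_snowflake v1 v2 v3 1) by assumption; reflexivity.
  - apply length_code.
Qed.
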